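(* Let $\mathcal{G}=(\mathcal{V},\mathcal{E})$ be connected, $c\in\mathbb{R}^n$, $\bar c=\frac1n\sum_ic_i$, $R_0=\tfrac12\|c-\bar c\mathbf{1}\|^2$, and let $\{\lambda^t\}_{t\ge0}$ be positive stepsizes. Set $x^0=c$ and for $t\ge0$ choose $e=(i,j)\in\mathcal{E}$ uniformly at random (independently across iterations); if $x_i^t<x_j^t$ set $x_i^{t+1}=x_i^t+\lambda^t$, $x_j^{t+1}=x_j^t-\lambda^t$; otherwise set $x_i^{t+1}=x_i^t-\lambda^t$, $x_j^{t+1}=x_j^t+\lambda^t$; all other coordinates are unchanged. Let $L^t=\frac1m\sum_{(i,j)\in\mathcal{E}}|x_i^t-x_j^t|$, $\alpha^k=\sum_{t=0}^k\lambda^t$, $\beta^k=\sum_{t=0}^k(\lambda^t)^2$. Then for all $k\ge1$ $$\min_{t=0,\dots,k}\mathbb{E}[L^t]\le\sum_{t=0}^k\frac{\lambda^t}{\alpha^k}\mathbb{E}[L^t]\le U^k:=\frac{R_0}{\alpha^k}+\frac{\beta^k}{\alpha^k}.$$ Moreover: (i) if $\lambda^t=\lambda^0>0$ for all $t$, then $U^k=\frac{R_0}{\lambda^0(k+1)}+\lambda^0$; (ii) for fixed $k$ and any $R>0$, over all positive $(\lambda^0,\dots,\lambda^k)$ the quantity $\frac{R+\beta^k}{\alpha^k}$ is minimized by $\lambda^t=\sqrt{R/(k+1)}$ for all $t\le k$, with minimum value $2\sqrt{R/(k+1)}$; in particular if $R\ge R_0$ this choice gives $U^k\le2\sqrt{R/(k+1)}$;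 (iii) if $\lambda^t=a/\sqrt{t+1}$ with $a>0$, then $$U^k\le\frac{R_0+a^2(\log(k+3/2)+\log 2)}{2a(\sqrt{k+2}-1)}.$$
   Context: $\mathcal{G}$ is an undirected graph with vertices $\mathcal{V}=\{1,\dots,n\}$ and $m=|\mathcal{E}|$ edges, each edge $e=(i,j)$ having an arbitrary but fixed orientation; $\mathbf{1}$ is the all-ones vector in $\mathbb{R}^n$ and $\|\cdot\|$ the Euclidean norm. *)

From Stdlib Require Import Reals Lra Lia List.
Import ListNotations.
Open Scope R_scope.

(* An edge (i,j) with a fixed orientation; vertices are 0..n-1. *)
Definition edge := (nat * nat)%type.

(* Real-valued vectors indexed by vertices (only coordinates < n matter). *)
Definition vec := nat -> R.

Definition sumR (l : list R) : R := fold_right Rplus 0 l.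

Definition simple_graph (n : nat) (E : list edge) : Prop :=
  NoDup E /\
  (forall i j, In (i, j) E -> (i < n)%nat /\ (j < n)%nat /\ i <> j) /\
  (forall i j, In (i, j) E -> ~ In (j, i) E).

Inductive reach (E : list edge) : nat -> nat -> Prop :=
| reach_refl : forall i, reach E i i
| reach_fwd : forall i j k, In (i, j) E -> reach E j k -> reach E i k
| reach_bwd : forall i j k, In (j, i) E -> reach E j k -> reach E i k.

Definition connected (n : nat) (E : list edge) : Prop :=
  forall i j, (i < n)%nat -> (j < n)%nat -> reach E i j.

Definition mean (n : nat) (c : vec) : R :=
  sumR (map c (seq 0 n)) / INR n.
Definition Rzero (n : nat) (c : vec) : R :=
  / 2 * sumR (map (fun i => (c i - mean n c) ^ 2) (seq 0 n)).

Definition step (lam : R) (x : vec) (e : edge) : vec :=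
  let (i, j) := e in
  fun v =>
    if Nat.eqb v i then
      (if Rlt_dec (x i) (x j) then x i + lam else x i - lam)
    else if Nat.eqb v j then
      (if Rlt_dec (x i) (x j) then x j - lam else x j + lam)
    else x v.

Fixpoint run (lam : nat -> R) (t : nat) (x : vec) (s : list edge) : vec :=
  match s with
  | [] => x
  | e :: s' => run lam (S t) (step (lam t) x e) s'
  end.

(* x^t as a function of the first t edge choices (x^0 = c). *)
Definition iterate (lam : nat -> R) (c : vec) (s : list edge) : vec :=
  run lam 0 c s.

(* All sequences of length t of edges from E (the sample space for t draws). *)
Fixpoint seqs (E : list edge) (t : nat) : list (list edge) :=
  match t with
  | O => [ [] ]
  | S t' => flat_map (fun e => map (cons e) (seqs E t')) E
  end.

Definition Lfun (E : list edge) (x : vec) : R :=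
  / INR (length E) * sumR (map (fun e => Rabs (x (fst e) - x (snd e))) E).

(* E[L^t] with i.i.d. uniform edge choices: average over all m^t sequences. *)
Definition ExpL (E : list edge) (lam : nat -> R) (c : vec) (t : nat) : R :=
  (/ INR (length E)) ^ t *
  sumR (map (fun s => Lfun E (iterate lam c s)) (seqs E t)).

Definition alpha (lam : nat -> R) (k : nat) : R := sum_f_R0 lam k.
Definition beta (lam : nat -> R) (k : nat) : R := sum_f_R0 (fun t => lam t ^ 2) k.

Fixpoint min_upto (f : nat -> R) (k : nat) : R :=
  match k with
  | O => f O
  | S k' => Rmin (min_upto f k') (f k)
  end.

Definition Ubound (R0v : R) (lam : nat -> R) (k : nat) : R :=
  R0v / alpha lam k + beta lam k / alpha lam k.

(** The potential [Φ x = ½ ‖x − c̄ 1‖²] drives the argument. A step along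
    [e = (i, j)] with stepsize [λ] moves [x_i] and [x_j] by [λ] towards each other,
    so it lowers [Φ] by exactly [λ |x_i − x_j|] and raises it by [λ²]. Averaging over
    the uniformly chosen edge gives [E Φ(x^{t+1}) = E Φ(x^t) − λ^t E[L^t] + (λ^t)²];
    telescoping from [Φ(x^0) = R_0] and using [Φ ≥ 0] yields
    [Σ_t λ^t E[L^t] ≤ R_0 + β^k], and the minimum is at most the weighted average.
    For (ii), Cauchy–Schwarz gives [(α^k)² ≤ (k+1) β^k], and then AM–GM bounds
    [(R + β^k)/α^k] below by [2 √(R/(k+1))]. For (iii), compare the sums with integrals:
    [Σ 1/√(t+1) ≥ 2(√(k+2) − 1)] and [Σ 1/(t+1) ≤ ln (2k+3)]. *)

From Stdlib Require Import Reals List Lra Lia.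
Import ListNotations.
Open Scope R_scope.

Lemma sumR_app (l1 l2 : list R) : sumR (l1 ++ l2) = sumR l1 + sumR l2.
Proof. induction l1 as [|a l1 IH]; simpl; [ring | rewrite IH; ring]. Qed.

Lemma sumR_map_flat_map {A B} (h : B -> R) (f : A -> list B) (l : list A) :
  sumR (map h (flat_map f l)) = sumR (map (fun a => sumR (map h (f a))) l).
Proof.
  induction l as [|a l IH]; simpl; [reflexivity|].
  rewrite map_app, sumR_app, IH; reflexivity.
Qed.

Lemma sumR_map_ext_in {A} (f g : A -> R) (l : list A) :
  (forall a, In a l -> f a = g a) -> sumR (map f l) = sumR (map g l).
Proof. intros H; rewrite (map_ext_in f g l H); reflexivity. Qed.

Lemma sumR_map_plus {A} (f g : A -> R) (l : list A) :
  sumR (map (fun a => f a + g a) l) = sumR (map f l) + sumR (map g l).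
Proof. induction l as [|a l IH]; simpl; [ring | rewrite IH; ring]. Qed.

Lemma sumR_map_scal {A} (f : A -> R) (r : R) (l : list A) :
  sumR (map (fun a => r * f a) l) = r * sumR (map f l).
Proof. induction l as [|a l IH]; simpl; [ring | rewrite IH; ring]. Qed.

Lemma sumR_map_const {A} (r : R) (l : list A) :
  sumR (map (fun _ => r) l) = INR (length l) * r.
Proof.
  induction l as [|a l IH]; [simpl; ring|].
  simpl length; rewrite S_INR; simpl; rewrite IH; ring.
Qed.

Lemma sumR_map_nonneg {A} (f : A -> R) (l : list A) :
  (forall a, 0 <= f a) -> 0 <= sumR (map f l).
Proof. intros H; induction l as [|a l IH]; simpl; [lra | specialize (H a); lra]. Qed.

Lemma sumR_indicator_notin (i : nat) (r : R) (l : list nat) : ~ In i l ->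
  sumR (map (fun v => if Nat.eqb v i then r else 0) l) = 0.
Proof.
  induction l as [|v l IH]; simpl; intros Hi; [reflexivity|].
  destruct (Nat.eqb_spec v i); [tauto|]. rewrite IH by tauto; ring.
Qed.

Lemma sumR_indicator (i : nat) (r : R) (l : list nat) : NoDup l -> In i l ->
  sumR (map (fun v => if Nat.eqb v i then r else 0) l) = r.
Proof.
  induction 1 as [|v l Hv Hl IH]; simpl; intros Hi; [tauto|].
  destruct (Nat.eqb_spec v i) as [<-|Hvi].
  - rewrite sumR_indicator_notin by exact Hv; ring.
  - rewrite IH by (destruct Hi; [congruence | assumption]); ring.
Qed.

Lemma sum_f_R0_scal (r : R) (h : nat -> R) (k : nat) :
  sum_f_R0 (fun t => r * h t) k = r * sum_f_R0 h k.
Proof. rewrite scal_sum; apply sum_eq; intros; ring. Qed.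

Lemma div_le_div_compat (x x' y y' : R) :
  0 <= x <= x' -> 0 < y' <= y -> x / y <= x' / y'.
Proof.
  intros [Hx Hxx] [Hy Hyy]; unfold Rdiv.
  apply Rmult_le_compat; try lra.
  - left; apply Rinv_0_lt_compat; lra.
  - apply Rinv_le_contravar; lra.
Qed.

(** * The potential *)

Definition potential (n : nat) (M : R) (x : vec) : R :=
  / 2 * sumR (map (fun v => (x v - M) ^ 2) (seq 0 n)).

Lemma potential_nonneg n M x : 0 <= potential n M x.
Proof.
  unfold potential; apply Rmult_le_pos; [lra|].
  apply sumR_map_nonneg; intros; apply pow2_ge_0.
Qed.

Lemma potential_step n M lam x i j :
  (i < n)%nat -> (j < n)%nat -> i <> j ->
  potential n M (step lam x (i, j)) = potential n M x - lam * Rabs (x i - x j) + lam ^ 2.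
Proof.
  intros Hi Hj Hij; unfold potential.
  set (xi := if Rlt_dec (x i) (x j) then x i + lam else x i - lam).
  set (xj := if Rlt_dec (x i) (x j) then x j - lam else x j + lam).
  rewrite (sumR_map_ext_in _ (fun v => ((x v - M) ^ 2
     + (if Nat.eqb v i then (xi - M) ^ 2 - (x i - M) ^ 2 else 0))
     + (if Nat.eqb v j then (xj - M) ^ 2 - (x j - M) ^ 2 else 0))).
  2:{ intros v _; unfold step; fold xi xj.
      destruct (Nat.eqb_spec v i), (Nat.eqb_spec v j); subst; try lia; ring. }
  rewrite !sumR_map_plus, !sumR_indicator by (apply seq_NoDup || (apply in_seq; lia)).
  unfold xi, xj; destruct (Rlt_dec (x i) (x j)).
  - rewrite Rabs_left by lra; lra.
  - rewrite Rabs_right by lra; lra.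
Qed.

Lemma INR_length_pos {A} (l : list A) : l <> nil -> 0 < INR (length l).
Proof. intros Hl; apply lt_0_INR; destruct l; [congruence | simpl; lia]. Qed.

Lemma potential_mean_step n M E lam x : simple_graph n E -> E <> nil ->
  / INR (length E) * sumR (map (fun e => potential n M (step lam x e)) E) =
  potential n M x - lam * Lfun E x + lam ^ 2.
Proof.
  intros [_ [HE _]] Hne.
  rewrite (sumR_map_ext_in _ (fun e => (potential n M x + lam ^ 2)
                                     + - lam * Rabs (x (fst e) - x (snd e)))).
  2:{ intros [i j] Hin; destruct (HE i j Hin) as [Hi [Hj Hij]].
      rewrite potential_step by assumption; simpl; ring. }
  rewrite sumR_map_plus, sumR_map_const, sumR_map_scal.
  pose proof (INR_length_pos E Hne); unfold Lfun, edge in *; field; lra.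
Qed.

(** * Expectations over edge sequences *)

Lemma In_seqs_length E t s : In s (seqs E t) -> length s = t.
Proof.
  revert s; induction t as [|t IH]; intros s Hs; simpl in Hs.
  - destruct Hs as [<-|[]]; reflexivity.
  - apply in_flat_map in Hs as [e [_ Hs]]; apply in_map_iff in Hs as [s' [<- Hs]].
    simpl; rewrite (IH s' Hs); reflexivity.
Qed.

Lemma length_seqs E t : length (seqs E t) = (length E ^ t)%nat.
Proof.
  induction t as [|t IH]; [reflexivity|].
  change (length (flat_map (fun e => map (cons e) (seqs E t)) E) = (length E * length E ^ t)%nat).
  rewrite <- IH; clear IH; generalize (seqs E t) as L; intros L.
  induction E as [|e E IHE]; simpl; [reflexivity|].
  rewrite length_app, length_map, IHE; reflexivity.
Qed.

(* [seqs] prepends the new draw; summing over the last draw instead is what matches the dynamics. *)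
Lemma sumR_seqs_snoc E t (h : list edge -> R) :
  sumR (map h (seqs E (S t))) =
  sumR (map (fun s => sumR (map (fun e => h (s ++ [e])) E)) (seqs E t)).
Proof.
  revert h; induction t as [|t IH]; intros h.
  - simpl; rewrite sumR_map_flat_map, Rplus_0_r; simpl.
    apply sumR_map_ext_in; intros; ring.
  - change (seqs E (S (S t))) with (flat_map (fun e => map (cons e) (seqs E (S t))) E).
    change (seqs E (S t)) with (flat_map (fun e => map (cons e) (seqs E t)) E) at 2.
    rewrite !sumR_map_flat_map; apply sumR_map_ext_in; intros e _.
    rewrite !map_map, (IH (fun s => h (e :: s))); reflexivity.
Qed.

Lemma run_snoc lam t x s e :
  run lam t x (s ++ [e]) = step (lam (t + length s)%nat) (run lam t x s) e.
Proof.
  revert t x; induction s as [|e' s IH]; intros t x; simpl.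
  - rewrite Nat.add_0_r; reflexivity.
  - rewrite IH, Nat.add_succ_r; reflexivity.
Qed.

Section Expectation.

Variables (E : list edge) (lam : nat -> R) (c : vec).
Hypothesis HE : E <> nil.

Definition expect (F : vec -> R) (t : nat) : R :=
  (/ INR (length E)) ^ t * sumR (map (fun s => F (iterate lam c s)) (seqs E t)).

Lemma expect_succ F t :
  expect F (S t) =
  expect (fun x => / INR (length E) * sumR (map (fun e => F (step (lam t) x e)) E)) t.
Proof.
  unfold expect; rewrite sumR_seqs_snoc, sumR_map_scal; simpl pow.
  rewrite (sumR_map_ext_in (fun s => sumR (map (fun e => F (iterate lam c (s ++ [e]))) E))
                           (fun s => sumR (map (fun e => F (step (lam t) (iterate lam c s) e)) E))).
  - ring.
  - intros s Hs; apply sumR_map_ext_in; intros e _.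
    unfold iterate; rewrite run_snoc, (In_seqs_length _ _ _ Hs); reflexivity.
Qed.

Lemma expect_0 F : expect F 0 = F c.
Proof. unfold expect, iterate; simpl; ring. Qed.

Lemma expect_ext F G t : (forall x, F x = G x) -> expect F t = expect G t.
Proof. intros H; unfold expect; f_equal; apply sumR_map_ext_in; intros; apply H. Qed.

Lemma expect_affine F G a b t :
  expect (fun x => F x + a * G x + b) t = expect F t + a * expect G t + b.
Proof.
  unfold expect; rewrite !sumR_map_plus, !sumR_map_scal, sumR_map_const.
  rewrite length_seqs, pow_INR.
  assert (Hm := INR_length_pos E HE).
  assert (Hinv : (/ INR (length E)) ^ t * INR (length E) ^ t = 1).
  { rewrite <- Rpow_mult_distr, Rinv_l by lra; apply pow1. }
  replace b with (((/ INR (length E)) ^ t * INR (length E) ^ t) * b) at 2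
    by (rewrite Hinv; ring).
  ring.
Qed.

Lemma expect_nonneg F t : (forall x, 0 <= F x) -> 0 <= expect F t.
Proof.
  intros HF; unfold expect; apply Rmult_le_pos.
  - apply pow_le; left; apply Rinv_0_lt_compat, INR_length_pos, HE.
  - apply sumR_map_nonneg; intros; apply HF.
Qed.

Lemma expect_potential_succ n M t : simple_graph n E ->
  expect (potential n M) (S t)
  = expect (potential n M) t - lam t * expect (Lfun E) t + lam t ^ 2.
Proof.
  intros HG; rewrite expect_succ.
  rewrite (expect_ext _ (fun x => potential n M x + - lam t * Lfun E x + lam t ^ 2)).
  - rewrite expect_affine; ring.
  - intros x; rewrite potential_mean_step by assumption; ring.
Qed.

Lemma weighted_sum_ExpL_le n k : simple_graph n E ->
  sum_f_R0 (fun t => lam t * ExpL E lam c t) k <= Rzero n c + beta lam k.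
Proof.
  intros HG.
  assert (Htel : expect (potential n (mean n c)) (S k)
                 = Rzero n c - sum_f_R0 (fun t => lam t * ExpL E lam c t) k + beta lam k).
  { unfold beta; induction k as [|k IH]; rewrite expect_potential_succ by assumption.
    - rewrite expect_0; reflexivity.
    - rewrite IH, !tech5; change (expect (Lfun E) (S k)) with (ExpL E lam c (S k)); ring. }
  pose proof (expect_nonneg _ (S k) (potential_nonneg n (mean n c))); lra.
Qed.

End Expectation.

(** * From the weighted sum to [U^k] *)

Lemma sum_f_R0_nonneg w k : (forall t, (t <= k)%nat -> 0 <= w t) -> 0 <= sum_f_R0 w k.
Proof.
  intros Hw; apply Rle_trans with (sum_f_R0 (fun _ => 0) k).
  - rewrite sum_cte; lra.
  - apply sum_Rle; exact Hw.
Qed.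

Lemma min_upto_mul_sum_le f w k : (forall t, (t <= k)%nat -> 0 <= w t) ->
  min_upto f k * sum_f_R0 w k <= sum_f_R0 (fun t => w t * f t) k.
Proof.
  intros Hw; induction k as [|k IH]; simpl; [lra|].
  assert (IHk : min_upto f k * sum_f_R0 w k <= sum_f_R0 (fun t => w t * f t) k)
    by (apply IH; intros; apply Hw; lia).
  assert (Hs : 0 <= sum_f_R0 w k) by (apply sum_f_R0_nonneg; intros; apply Hw; lia).
  assert (Hw1 := Hw (S k) ltac:(lia)).
  assert (Rmin (min_upto f k) (f (S k)) * sum_f_R0 w k <= min_upto f k * sum_f_R0 w k)
    by (apply Rmult_le_compat_r; [exact Hs | apply Rmin_l]).
  assert (Rmin (min_upto f k) (f (S k)) * w (S k) <= f (S k) * w (S k))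
    by (apply Rmult_le_compat_r; [exact Hw1 | apply Rmin_r]).
  nra.
Qed.

Lemma min_upto_le_weighted_mean f lam k : (forall t, 0 < lam t) ->
  min_upto f k <= sum_f_R0 (fun t => lam t / alpha lam k * f t) k.
Proof.
  intros Hpos.
  assert (Ha : 0 < alpha lam k) by (apply tech1; intros; apply Hpos).
  assert (Hw1 : sum_f_R0 (fun t => lam t / alpha lam k) k = 1).
  { unfold Rdiv; rewrite (sum_eq _ (fun t => / alpha lam k * lam t)) by (intros; ring).
    rewrite sum_f_R0_scal; fold (alpha lam k); field; lra. }
  rewrite <- (Rmult_1_r (min_upto f k)), <- Hw1.
  apply min_upto_mul_sum_le; intros; left; apply Rdiv_lt_0_compat; auto.
Qed.

Lemma Ubound_eq R0 lam k : Ubound R0 lam k = (R0 + beta lam k) / alpha lam k.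
Proof. unfold Ubound, Rdiv; ring. Qed.

Lemma Ubound_ext R0 lam mu k : (forall t, (t <= k)%nat -> lam t = mu t) ->
  Ubound R0 lam k = Ubound R0 mu k.
Proof.
  intros H; unfold Ubound, alpha, beta.
  rewrite (sum_eq lam mu), (sum_eq (fun t => lam t ^ 2) (fun t => mu t ^ 2));
    auto; intros t Ht; rewrite H; auto.
Qed.

Lemma Ubound_le_compat R0 R1 lam k : R0 <= R1 -> 0 < alpha lam k ->
  Ubound R0 lam k <= Ubound R1 lam k.
Proof.
  intros HR Ha; unfold Ubound, Rdiv.
  apply Rplus_le_compat_r, Rmult_le_compat_r; [left; apply Rinv_0_lt_compat|]; lra.
Qed.

Lemma weighted_mean_le_Ubound f R0 lam k : (forall t, 0 < lam t) ->
  sum_f_R0 (fun t => lam t * f t) k <= R0 + beta lam k ->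
  sum_f_R0 (fun t => lam t / alpha lam k * f t) k <= Ubound R0 lam k.
Proof.
  intros Hpos Hsum.
  assert (Ha : 0 < alpha lam k) by (apply tech1; intros; apply Hpos).
  rewrite (sum_eq _ (fun t => / alpha lam k * (lam t * f t))) by (intros; unfold Rdiv; ring).
  rewrite sum_f_R0_scal, Ubound_eq; unfold Rdiv; rewrite Rmult_comm.
  apply Rmult_le_compat_r; [left; apply Rinv_0_lt_compat|]; lra.
Qed.

Lemma alpha_const lam x k : (forall t, (t <= k)%nat -> lam t = x) -> alpha lam k = x * INR (S k).
Proof. intros H; unfold alpha; rewrite (sum_eq _ (fun _ => x)) by exact H; apply sum_cte. Qed.

Lemma beta_const lam x k :
  (forall t, (t <= k)%nat -> lam t = x) -> beta lam k = x ^ 2 * INR (S k).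
Proof.
  intros H; unfold beta.
  rewrite (sum_eq _ (fun _ => x ^ 2)) by (intros; rewrite H; auto); apply sum_cte.
Qed.

Lemma Ubound_const R0 lam x k : 0 < x -> (forall t, (t <= k)%nat -> lam t = x) ->
  Ubound R0 lam k = R0 / (x * INR (k + 1)) + x.
Proof.
  intros Hx H; unfold Ubound; rewrite (alpha_const lam x k), (beta_const lam x k) by exact H.
  rewrite Nat.add_1_r; pose proof (lt_0_INR (S k) (Nat.lt_0_succ k)); field; lra.
Qed.

(** * The optimal constant stepsize *)

Lemma sum_f_R0_sqr_le mu k :
  sum_f_R0 mu k ^ 2 <= INR (S k) * sum_f_R0 (fun t => mu t ^ 2) k.
Proof.
  set (N := INR (S k)); set (S0 := sum_f_R0 mu k); set (m := S0 / N).
  assert (HN : 0 < N) by apply lt_0_INR, Nat.lt_0_succ.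
  assert (Hvar : 0 <= sum_f_R0 (fun t => (mu t - m) ^ 2) k)
    by (apply sum_f_R0_nonneg; intros; apply pow2_ge_0).
  rewrite (sum_eq _ (fun t => (mu t ^ 2 + - 2 * m * mu t) + m ^ 2)) in Hvar by (intros; ring).
  rewrite !sum_plus, sum_f_R0_scal, sum_cte in Hvar; fold S0 N in Hvar.
  unfold m in Hvar; apply Rmult_le_compat_l with (r := N) in Hvar; [|lra].
  replace (N * (sum_f_R0 (fun t => mu t ^ 2) k + -2 * (S0 / N) * S0 + (S0 / N) ^ 2 * N))
    with (N * sum_f_R0 (fun t => mu t ^ 2) k - S0 ^ 2) in Hvar by (field; lra).
  lra.
Qed.

Lemma two_sqrt_le_ratio N Rb A B : 0 < N -> 0 < Rb -> 0 < A -> A ^ 2 <= N * B ->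
  2 * sqrt (Rb / N) <= (Rb + B) / A.
Proof.
  intros HN HRb HA HAB.
  assert (Hs2 := sqrt_sqrt (Rb / N) ltac:(left; apply Rdiv_lt_0_compat; lra)).
  set (s := sqrt (Rb / N)) in *; clearbody s.
  assert (HRb' : Rb = N * (s * s)) by (rewrite Hs2; field; lra).
  apply (Rmult_le_reg_r A); [exact HA|].
  replace ((Rb + B) / A * A) with (Rb + B) by (field; lra).
  apply (Rmult_le_reg_l N); [exact HN|].
  (* [N (Rb + B - 2 s A) >= (N s - A)^2] *)
  pose proof (pow2_ge_0 (N * s - A)); rewrite HRb'; nra.
Qed.

Lemma const_step_ratio k Rb : 0 < Rb ->
  (Rb + beta (fun _ => sqrt (Rb / INR (k + 1))) k)
    / alpha (fun _ => sqrt (Rb / INR (k + 1))) k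
  = 2 * sqrt (Rb / INR (k + 1)).
Proof.
  intros HRb.
  rewrite (alpha_const _ (sqrt (Rb / INR (k + 1)))), (beta_const _ (sqrt (Rb / INR (k + 1))))
    by reflexivity.
  rewrite Nat.add_1_r.
  assert (HN : 0 < INR (S k)) by apply lt_0_INR, Nat.lt_0_succ.
  assert (Hs : 0 < sqrt (Rb / INR (S k))) by (apply sqrt_lt_R0, Rdiv_lt_0_compat; lra).
  assert (Hs2 := sqrt_sqrt (Rb / INR (S k)) ltac:(left; apply Rdiv_lt_0_compat; lra)).
  set (s := sqrt (Rb / INR (S k))) in *; clearbody s.
  replace Rb with (s * s * INR (S k)) at 1 by (rewrite Hs2; field; lra).
  field; lra.
Qed.

Lemma const_step_ratio_le k Rb mu : 0 < Rb -> (forall t, (t <= k)%nat -> 0 < mu t) ->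
  (Rb + beta (fun _ => sqrt (Rb / INR (k + 1))) k)
    / alpha (fun _ => sqrt (Rb / INR (k + 1))) k
  <= (Rb + beta mu k) / alpha mu k.
Proof.
  intros HRb Hmu; rewrite const_step_ratio by exact HRb.
  apply two_sqrt_le_ratio; [apply lt_0_INR; lia | exact HRb | apply tech1, Hmu |].
  rewrite Nat.add_1_r; apply sum_f_R0_sqr_le.
Qed.

(** * Stepsizes [a / √(t+1)] *)

Lemma sqrt_succ_sub_le y : 0 < y -> 2 * (sqrt (y + 1) - sqrt y) <= / sqrt y.
Proof.
  intros Hy.
  assert (Hu : 0 < sqrt y) by (apply sqrt_lt_R0; lra).
  assert (Hu2 := sqrt_sqrt y ltac:(lra)).
  assert (Hv2 := sqrt_sqrt (y + 1) ltac:(lra)).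
  assert (Hv := sqrt_pos (y + 1)).
  set (u := sqrt y) in *; set (v := sqrt (y + 1)) in *.
  apply (Rmult_le_reg_r u); [exact Hu|]; rewrite Rinv_l by lra.
  (* [2 (v - u) u <= 1] is [(v - u)^2 >= 0] after substituting [v^2 = u^2 + 1] *)
  nra.
Qed.

Lemma sum_inv_sqrt_ge k :
  2 * (sqrt (INR k + 2) - 1) <= sum_f_R0 (fun t => / sqrt (INR t + 1)) k.
Proof.
  induction k as [|k IH].
  - pose proof (sqrt_succ_sub_le 1 ltac:(lra)) as H; simpl.
    replace (0 + 2) with (1 + 1) by ring; replace (0 + 1) with 1 by ring.
    rewrite sqrt_1 in *; lra.
  - pose proof (sqrt_succ_sub_le (INR k + 2) ltac:(pose proof (pos_INR k); lra)) as H.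
    rewrite tech5, S_INR.
    replace (INR k + 1 + 2) with (INR k + 2 + 1) by ring.
    replace (INR k + 1 + 1) with (INR k + 2) by ring.
    lra.
Qed.

Lemma ln_ge_ratio q : 1 <= q -> 2 * (q - 1) / (q + 1) <= ln q.
Proof.
  intros Hq; destruct (Req_dec q 1) as [->|Hne].
  { rewrite ln_1; unfold Rdiv; lra. }
  set (f := fun z => ln z - 2 * (z - 1) / (z + 1)).
  assert (Hderiv : forall z, 1 <= z <= q ->
                     derivable_pt_lim f z ((z - 1) ^ 2 / (z * (z + 1) ^ 2))).
  { intros z Hz; unfold f.
    assert (D0 := derivable_pt_lim_minus id (fct_cte 1) z 1 0
                    (derivable_pt_lim_id z) (derivable_pt_lim_const 1 z)).
    assert (D1 := derivable_pt_lim_scal _ 2 z _ D0).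
    assert (D2 := derivable_pt_lim_plus id (fct_cte 1) z 1 0
                    (derivable_pt_lim_id z) (derivable_pt_lim_const 1 z)).
    assert (D3 := derivable_pt_lim_div _ _ z _ _ D1 D2
                    ltac:(unfold plus_fct, id, fct_cte; lra)).
    assert (D4 := derivable_pt_lim_minus _ _ z _ _ (derivable_pt_lim_ln z ltac:(lra)) D3).
    unfold minus_fct, div_fct, mult_real_fct, plus_fct, id, fct_cte in D4.
    replace ((z - 1) ^ 2 / (z * (z + 1) ^ 2))
      with (/ z - (2 * (1 - 0) * (z + 1) - (1 + 0) * (2 * (z - 1))) / (z + 1)²)
      by (unfold Rsqr; field; lra).
    exact D4. }
  destruct (MVT_cor2 f (fun z => (z - 1) ^ 2 / (z * (z + 1) ^ 2)) 1 q ltac:(lra) Hderiv)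
    as [z [Hmvt Hz]].
  unfold f in Hmvt; rewrite ln_1 in Hmvt.
  assert (0 <= (z - 1) ^ 2 / (z * (z + 1) ^ 2) * (q - 1)).
  { apply Rmult_le_pos; [|lra].
    apply Rmult_le_pos; [apply pow2_ge_0 | left; apply Rinv_0_lt_compat; nra]. }
  replace (2 * (1 - 1) / (1 + 1)) with 0 in Hmvt by field.
  lra.
Qed.

Lemma inv_le_ln_sub y : / 2 < y -> / y <= ln (y + / 2) - ln (y - / 2).
Proof.
  intros Hy.
  assert (Hq : 1 <= (y + / 2) / (y - / 2)).
  { apply (Rmult_le_reg_r (y - / 2)); [lra|].
    unfold Rdiv; rewrite Rmult_assoc, Rinv_l by lra; lra. }
  pose proof (ln_ge_ratio _ Hq) as H.
  assert (Hln : ln ((y + / 2) / (y - / 2)) = ln (y + / 2) - ln (y - / 2)).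
  { unfold Rdiv; rewrite ln_mult, ln_Rinv by (try apply Rinv_0_lt_compat; lra); ring. }
  rewrite Hln in H.
  replace (/ y) with (2 * ((y + / 2) / (y - / 2) - 1) / ((y + / 2) / (y - / 2) + 1))
    by (field; lra).
  exact H.
Qed.

Lemma sum_inv_le_ln k : sum_f_R0 (fun t => / (INR t + 1)) k <= ln (INR k + 3 / 2) + ln 2.
Proof.
  induction k as [|k IH].
  - pose proof (inv_le_ln_sub 1 ltac:(lra)) as H; simpl.
    replace (1 - / 2) with (/ 2) in H by field; rewrite ln_Rinv in H by lra.
    replace (0 + 1) with 1 by ring; replace (0 + 3 / 2) with (1 + / 2) by field.
    lra.
  - pose proof (inv_le_ln_sub (INR k + 2) ltac:(pose proof (pos_INR k); lra)) as H.
    rewrite tech5, S_INR.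
    replace (INR k + 2 - / 2) with (INR k + 3 / 2) in H by field.
    replace (INR k + 2 + / 2) with (INR k + 1 + 3 / 2) in H by field.
    replace (INR k + 1 + 1) with (INR k + 2) by ring.
    lra.
Qed.

Lemma alpha_inv_sqrt_ge a lam k : 0 < a -> (forall t, lam t = a / sqrt (INR t + 1)) ->
  2 * a * (sqrt (INR k + 2) - 1) <= alpha lam k.
Proof.
  intros Ha Hlam; unfold alpha.
  rewrite (sum_eq _ (fun t => a * / sqrt (INR t + 1))) by (intros; apply Hlam).
  rewrite sum_f_R0_scal; pose proof (sum_inv_sqrt_ge k); nra.
Qed.

Lemma beta_inv_sqrt_le a lam k : (forall t, lam t = a / sqrt (INR t + 1)) ->
  beta lam k <= a ^ 2 * (ln (INR k + 3 / 2) + ln 2).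
Proof.
  intros Hlam; unfold beta.
  rewrite (sum_eq _ (fun t => a ^ 2 * / (INR t + 1))).
  - rewrite sum_f_R0_scal; apply Rmult_le_compat_l; [apply pow2_ge_0 | apply sum_inv_le_ln].
  - intros t _; rewrite Hlam; pose proof (pos_INR t).
    assert (Hs2 := sqrt_sqrt (INR t + 1) ltac:(lra)).
    unfold Rdiv; rewrite Rpow_mult_distr, pow_inv.
    replace (sqrt (INR t + 1) ^ 2) with (INR t + 1) by (simpl; lra); reflexivity.
Qed.

Theorem mainTheorem18
  (n : nat) (E : list edge) (c : vec) (lam : nat -> R)
  (HG : simple_graph n E) (Hconn : connected n E) (HE : E <> nil)
  (Hpos : forall t, 0 < lam t) :
  (forall k : nat, (1 <= k)%nat ->
     min_upto (ExpL E lam c) k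
       <= sum_f_R0 (fun t => lam t / alpha lam k * ExpL E lam c t) k /\
     sum_f_R0 (fun t => lam t / alpha lam k * ExpL E lam c t) k
       <= Ubound (Rzero n c) lam k) /\
  ((forall t, lam t = lam 0%nat) ->
     forall k : nat, (1 <= k)%nat ->
       Ubound (Rzero n c) lam k = Rzero n c / (lam 0%nat * INR (k + 1)) + lam 0%nat) /\
  (forall (k : nat) (Rb : R), (1 <= k)%nat -> 0 < Rb ->
     (forall mu : nat -> R, (forall t, (t <= k)%nat -> 0 < mu t) ->
        (Rb + beta (fun _ => sqrt (Rb / INR (k + 1))) k)
          / alpha (fun _ => sqrt (Rb / INR (k + 1))) k
        <= (Rb + beta mu k) / alpha mu k) /\
     (Rb + beta (fun _ => sqrt (Rb / INR (k + 1))) k)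
       / alpha (fun _ => sqrt (Rb / INR (k + 1))) k
       = 2 * sqrt (Rb / INR (k + 1)) /\
     (Rzero n c <= Rb ->
        (forall t, (t <= k)%nat -> lam t = sqrt (Rb / INR (k + 1))) ->
        Ubound (Rzero n c) lam k <= 2 * sqrt (Rb / INR (k + 1)))) /\
  (forall a : R, 0 < a -> (forall t, lam t = a / sqrt (INR t + 1)) ->
     forall k : nat, (1 <= k)%nat ->
       Ubound (Rzero n c) lam k
         <= (Rzero n c + a ^ 2 * (ln (INR k + 3 / 2) + ln 2))
            / (2 * a * (sqrt (INR k + 2) - 1))).
Proof.
  assert (Halpha : forall k, 0 < alpha lam k) by (intros; apply tech1; intros; apply Hpos).
  assert (HR0 : 0 <= Rzero n c) by apply potential_nonneg.
  split; [|split; [|split]].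
  - intros k _; split.
    + apply min_upto_le_weighted_mean, Hpos.
    + apply weighted_mean_le_Ubound, weighted_sum_ExpL_le; assumption.
  - intros Hconst k _; apply Ubound_const; auto.
  - intros k Rb _ HRb; split; [|split].
    + intros mu Hmu; apply const_step_ratio_le; assumption.
    + apply const_step_ratio, HRb.
    + intros HR0b Hlam.
      rewrite <- (const_step_ratio k Rb HRb), <- Ubound_eq, <- (Ubound_ext Rb lam) by exact Hlam.
      apply Ubound_le_compat; auto.
  - intros a Ha Hlam k Hk; rewrite Ubound_eq.
    assert (Hsqrt : 1 < sqrt (INR k + 2))
      by (rewrite <- sqrt_1; apply sqrt_lt_1; pose proof (pos_INR k); lra).
    apply div_le_div_compat; split.
    + assert (0 <= beta lam k) by (apply cond_pos_sum; intros; apply pow2_ge_0); lra.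
    + pose proof (beta_inv_sqrt_le a lam k Hlam); lra.
    + nra.
    + apply alpha_inv_sqrt_ge; assumption.
Qed.
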